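(* Let $p\geq 2$. Then $$\mathcal{P}_{1,p}\Lambda^{1}(\mathcal{T}_h^2)=\bm{L}_h^p+\bm{\Sigma}_b^p .$$ Here $\bm{L}_h^p$ is the space of globally continuous vector fields whose restriction to each triangle is in $(\mathcal{P}_p)^2$, i.e. the vector Lagrange element of degree $p$. The space $\bm{\Sigma}_b^p$ is $$\bm{\Sigma}_b^p=\{\bm{B}\in\mathcal{P}_{1,p}\Lambda^1(\mathcal{T}_h^2):\ \bm{B}\cdot\bm{\nu}_e=0 \text{ on } e \text{ for every edge } e\in\mathcal{E}\},$$ where $\bm{\nu}_e$ is a unit normal vector of $e$.
   Context: $\Omega\subset\mathbb{R}^2$ is a polygonal domain with a conforming triangulation $\mathcal{T}_h^2$ into triangles. $\mathcal{E}$ denotes the set of edges and $\mathcal{V}$ the set of vertices. $\mathcal{P}_p$ denotes polynomials of degree at most $p$. The space $\mathcal{P}_{1,p}\Lambda^{1}(\mathcal{T}_h^2)$ is defined by $$\mathcal{P}_{1,p}\Lambda^{1}(\mathcal{T}_h^2)=\{\bm{v}\in H(\mathrm{div};\Omega):\ \bm{v}|_f\in(\mathcal{P}_p(f))^2\ \forall f\in\mathcal{T}_h^2,\ \bm{v} \text{ is continuous at every vertex}\}.$$ Continuity at a vertex means that all elements containing that vertex give $\bm{v}$ the same value there. *)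

From mathcomp Require Import all_boot all_order all_algebra.
From mathcomp Require Import reals.
From mathcomp Require Export mpoly.
Set Implicit Arguments. Unset Strict Implicit. Unset Printing Implicit Defensive.
Import Order.TTheory GRing.Theory Num.Theory.
Local Open Scope ring_scope.

Section Defs.
Variable R : realType.

Definition point := 'rV[R]_2.

(* A mesh: a finite index type T of triangles, each given by its three
   vertices vtx t 0, vtx t 1, vtx t 2. *)
Variable T : finType.
Variable vtx : T -> 'I_3 -> point.

Definition in_tri (t : T) (x : point) : Prop :=
  exists l : 'I_3 -> R,
    (forall i, 0 <= l i) /\ \sum_i l i = 1 /\ x = \sum_i l i *: vtx t i.

Definition is_vtx (t : T) (a : point) : Prop := exists i, vtx t i = a.

(* Conforming triangulation:
   - every triangle is non-degenerate;
   - distinct indices give distinct triangles (distinct vertex sets);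
   - the intersection of two closed triangles is the convex hull of their
     common vertices (empty, a common vertex, or a common edge). *)
Definition conforming_triangulation : Prop :=
  [/\ forall t, \det (col_mx (vtx t 1 - vtx t 0) (vtx t 2 - vtx t 0)) != 0,
      forall t s, t != s -> exists i, ~ is_vtx s (vtx t i)
    & forall t s x, in_tri t x -> in_tri s x ->
        exists l : 'I_3 -> R,
          [/\ forall i, 0 <= l i, \sum_i l i = 1,
              x = \sum_i l i *: vtx t i
            & forall i, l i != 0 -> is_vtx s (vtx t i)]].

Definition in_seg (a b x : point) : Prop :=
  exists u : R, 0 <= u <= 1 /\ x = (1 - u) *: a + u *: b.

Definition dot (u w : point) : R := \sum_i u 0 i * w 0 i.

Definition unit_normal (a b : point) : point :=
  let d := b - a in
  (Num.sqrt (d 0 0 ^+ 2 + d 0 1 ^+ 2))^-1 *: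
    \row_(i < 2) (if i == 0 then - d 0 1 else d 0 0).

Definition pwfield := T -> 'I_2 -> {mpoly R[2]}.

Definition fval (v : pwfield) (t : T) (x : point) : point :=
  \row_(i < 2) (v t i).@[x 0].

(* Each piece is in (P_p)^2 : total degree at most p. *)
Definition pw_deg (p : nat) (v : pwfield) : Prop :=
  forall t i, (msize (v t i) <= p.+1)%N.

Definition normal_continuous (v : pwfield) : Prop :=
  forall t s a b x, a != b ->
    is_vtx t a -> is_vtx t b -> is_vtx s a -> is_vtx s b -> in_seg a b x ->
    dot (fval v t x) (unit_normal a b) = dot (fval v s x) (unit_normal a b).

Definition vertex_continuous (v : pwfield) : Prop :=
  forall t s a, is_vtx t a -> is_vtx s a -> fval v t a = fval v s a.

Definition globally_continuous (v : pwfield) : Prop :=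
  forall t s x, in_tri t x -> in_tri s x -> fval v t x = fval v s x.

Definition P1p (p : nat) (v : pwfield) : Prop :=
  [/\ pw_deg p v, normal_continuous v & vertex_continuous v].

Definition Lh (p : nat) (v : pwfield) : Prop :=
  pw_deg p v /\ globally_continuous v.

Definition Sigma_b (p : nat) (v : pwfield) : Prop :=
  P1p p v /\
  forall t a b x, a != b -> is_vtx t a -> is_vtx t b -> in_seg a b x ->
    dot (fval v t x) (unit_normal a b) = 0.

End Defs.

From HB Require Import structures.
From mathcomp Require Import all_boot all_order all_algebra.
From mathcomp Require Import reals mpoly.
From mathcomp Require Import ring zify.
Set Implicit Arguments. Unset Strict Implicit. Unset Printing Implicit Defensive.
Import Order.TTheory GRing.Theory Num.Theory.
Local Open Scope ring_scope.

(* Let l_0, l_1, l_2 be the barycentric coordinates of a triangle with vertices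
   a_0, a_1, a_2.  The edge [a_i, a_j] is the set where the third coordinate
   vanishes, and there l_i + l_j = 1.  Replacing every monomial x^m of a
   polynomial Q of degree <= p by (l_i a_i + l_j a_j)^m (l_i + l_j)^(p - |m|)
   gives a polynomial of degree <= p that equals Q on [a_i, a_j] and equals
   l_i^p Q(a_i) where l_j = 0.

   For v in P_{1,p}, let Q_e be the tangential part of v minus the linear
   interpolant of its vertex values along the edge e.  It vanishes at both ends
   of e, so the sum b of these lifts over the three edges of a triangle agrees
   with Q_e on every edge e.  Hence b has zero normal component on all edges
   and vanishes at the vertices: b lies in Sigma_b.  On an edge, v - b is the
   linear interpolant of the vertex values of v plus the normal component of v,
   and both are single-valued across the mesh by vertex and normal continuity;
   since two triangles of a conforming mesh meet in a common vertex or edge,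
   v - b is globally continuous. *)

Section DegreeBound.
Variables (R : nzRingType) (n : nat).

Definition deg_le (d : nat) : {pred {mpoly R[n]}} :=
  fun q => (msize q <= d.+1)%N.

Lemma deg_leE d q : (q \in deg_le d) = (msize q <= d.+1)%N.
Proof. by rewrite unfold_in. Qed.

Lemma deg_le_submod_closed d : submod_closed (deg_le d).
Proof.
split=> [|a q r]; rewrite !unfold_in ?msize0 // => hq hr.
by rewrite (leq_trans (msizeD_le _ _)) // geq_max hr (leq_trans (msizeZ_le _ _)).
Qed.

HB.instance Definition _ d :=
  GRing.isSubmodClosed.Build R {mpoly R[n]} (deg_le d) (deg_le_submod_closed d).

Lemma deg_leW d e q : (d <= e)%N -> q \in deg_le d -> q \in deg_le e.
Proof. by rewrite !unfold_in => de /leq_trans; apply. Qed.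

Lemma deg_leC d c : c%:MP \in deg_le d.
Proof. by rewrite unfold_in msizeC; case: (c == 0). Qed.

Lemma deg_leXU i : 'X_i \in deg_le 1.
Proof. by rewrite unfold_in msizeX mdeg1. Qed.

End DegreeBound.

Section DegreeBoundMul.
Variables (R : idomainType) (n : nat).
Implicit Types q r : {mpoly R[n]}.

Lemma deg_leM d e q r :
  q \in deg_le d -> r \in deg_le e -> q * r \in deg_le (d + e).
Proof.
have [->|q0] := eqVneq q 0; first by rewrite mul0r => _ _; apply: rpred0.
have [->|r0] := eqVneq r 0; first by rewrite mulr0 => _ _; apply: rpred0.
have q_gt0 : (0 < msize q)%N by rewrite lt0n msize_poly_eq0.
have r_gt0 : (0 < msize r)%N by rewrite lt0n msize_poly_eq0.
rewrite !unfold_in msizeM //; lia.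
Qed.

Lemma deg_leXn d k q : q \in deg_le d -> q ^+ k \in deg_le (d * k).
Proof.
move=> qd; elim: k => [|k IHk]; first by rewrite expr0 unfold_in msize1.
by rewrite exprS mulnS deg_leM.
Qed.

Lemma deg_le_prod (I : Type) (s : seq I) (F : I -> {mpoly R[n]}) (d : I -> nat) :
  (forall i, F i \in deg_le (d i)) -> \prod_(i <- s) F i \in deg_le (\sum_(i <- s) d i).
Proof.
move=> Fd; elim: s => [|i s IHs]; last by rewrite !big_cons deg_leM.
by rewrite !big_nil unfold_in msize1.
Qed.

End DegreeBoundMul.

Section EdgeLift.
Variables (R : comNzRingType) (n m p : nat).
Implicit Types (al be : {mpoly R[n]}) (a b : 'rV[R]_m) (Q : {mpoly R[m]}).

Definition edge_lift al be a b Q : {mpoly R[n]} :=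
  \sum_(mu <- msupp Q) Q@_mu *:
    ((\prod_k (a 0 k *: al + b 0 k *: be) ^+ mu k) * (al + be) ^+ (p - mdeg mu)).

Lemma meval_edge_lift al be a b Q (y : 'I_n -> R) :
  (edge_lift al be a b Q).@[y] = \sum_(mu <- msupp Q) Q@_mu *
    ((\prod_k (a 0 k * al.@[y] + b 0 k * be.@[y]) ^+ mu k) *
     (al.@[y] + be.@[y]) ^+ (p - mdeg mu)).
Proof.
rewrite rmorph_sum; apply: eq_bigr => mu _ /=.
rewrite mevalZ mevalM rmorphXn /= mevalD rmorph_prod /=; congr (_ * (_ * _)).
by apply: eq_bigr => k _; rewrite rmorphXn /= mevalD !mevalZ.
Qed.

Lemma edge_liftC al be a b Q : edge_lift al be a b Q = edge_lift be al b a Q.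
Proof.
rewrite /edge_lift [be + al]addrC; apply: eq_bigr => mu _.
by under [in RHS]eq_bigr => k _ do rewrite addrC.
Qed.

Lemma edge_lift_on_edge al be a b Q (y : 'I_n -> R) :
  al.@[y] + be.@[y] = 1 ->
  (edge_lift al be a b Q).@[y] = Q.@[(al.@[y] *: a + be.@[y] *: b) 0].
Proof.
move=> sum1; rewrite meval_edge_lift mevalE; apply: eq_bigr => mu _.
rewrite sum1 expr1n mulr1; congr (_ * _); apply: eq_bigr => k _.
by rewrite !mxE mulrC [b 0 k * _]mulrC.
Qed.

Lemma edge_lift_off_edge al be a b Q (y : 'I_n -> R) :
  Q \in deg_le p -> be.@[y] = 0 ->
  (edge_lift al be a b Q).@[y] = al.@[y] ^+ p * Q.@[a 0].
Proof.
rewrite unfold_in => Qp be0; rewrite meval_edge_lift be0 [Q.@[_]]mevalE big_distrr /=.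
rewrite !big_seq; apply: eq_bigr => mu /msize_mdeg_lt mu_lt.
have mu_le : (mdeg mu <= p)%N by rewrite -ltnS (leq_trans mu_lt).
under eq_bigr => k _ do rewrite mulr0 addr0 exprMn.
rewrite big_split /= prodrXr -mdegE addr0 -[in RHS](subnKC mu_le) exprD; ring.
Qed.

End EdgeLift.

Lemma deg_le_edge_lift (R : idomainType) (n m p : nat) (al be : {mpoly R[n]})
    (a b : 'rV[R]_m) (Q : {mpoly R[m]}) :
  al \in deg_le 1 -> be \in deg_le 1 -> Q \in deg_le p ->
  edge_lift p al be a b Q \in deg_le p.
Proof.
move=> al1 be1 Qp; rewrite /edge_lift big_seq; apply: rpred_sum => mu mu_Q.
apply: rpredZ; have mu_le : (mdeg mu <= p)%N.
  by rewrite -ltnS (leq_trans (msize_mdeg_lt mu_Q)).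
apply: (@deg_leW _ _ (mdeg mu + (p - mdeg mu))); first by rewrite subnKC.
apply: deg_leM.
  rewrite mdegE -(eq_bigr _ (fun k _ => mul1n (mu k))).
  by apply: deg_le_prod => k; apply/deg_leXn/rpredD; apply: rpredZ.
by rewrite -[X in deg_le X]mul1n; apply/deg_leXn/rpredD.
Qed.

Section SegmentCoordinates.
Variables (R : pzRingType) (n : nat).

Definition seg_coords (i j : 'I_n) (u : R) (k : 'I_n) : R :=
  (1 - u) * (k == i)%:R + u * (k == j)%:R.

Lemma sum_seg_coordsZ (M : lmodType R) (W : 'I_n -> M) i j u :
  \sum_k seg_coords i j u k *: W k = (1 - u) *: W i + u *: W j.
Proof.
have delta l : \sum_k (k == l)%:R *: W k = W l.
  by rewrite (bigD1 l) //= eqxx scale1r big1 ?addr0 // => k /negbTE ->; rewrite scale0r.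
rewrite -(delta i) -(delta j) !scaler_sumr -big_split /=.
by apply: eq_bigr => k _; rewrite /seg_coords !scalerA -scalerDl.
Qed.

Lemma sum_seg_coords i j u : \sum_k seg_coords i j u k = 1.
Proof.
move: (sum_seg_coordsZ (fun=> 1 : R^o) i j u); rewrite /GRing.scale /= !mulr1.
by under eq_bigr do rewrite mulr1; move=> ->; rewrite subrK.
Qed.

Lemma seg_coords_l i j u : i != j -> seg_coords i j u i = 1 - u.
Proof. by move=> /negbTE ij; rewrite /seg_coords eqxx ij mulr1 mulr0 addr0. Qed.

Lemma seg_coords_r i j u : i != j -> seg_coords i j u j = u.
Proof.
by rewrite eq_sym => /negbTE ji; rewrite /seg_coords eqxx ji mulr1 mulr0 add0r.
Qed.

Lemma seg_coords_other i j k u : k != i -> k != j -> seg_coords i j u k = 0.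
Proof. by rewrite /seg_coords => /negbTE -> /negbTE ->; rewrite !mulr0 addr0. Qed.

End SegmentCoordinates.

Lemma seg_coords_ge0 (R : numDomainType) n (i j : 'I_n) (u : R) k :
  0 <= u <= 1 -> 0 <= seg_coords i j u k.
Proof. by case/andP=> u0 u1; rewrite /seg_coords addr_ge0 ?mulr_ge0 ?subr_ge0. Qed.

Lemma sum_supp2 (M : nmodType) n (F : 'I_n -> M) (i j : 'I_n) :
  i != j -> (forall m, m != i -> m != j -> F m = 0) -> \sum_m F m = F i + F j.
Proof.
move=> ij F0; rewrite (bigD1 i) // (bigD1 j) 1?eq_sym //= big1 ?addr0 ?addrA //.
by move=> m /andP[mi mj]; apply: F0.
Qed.

Section Barycentric.
Variables (R : fieldType) (V : 'I_3 -> 'rV[R]_2).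

Definition edge_mx : 'M[R]_2 := col_mx (V 1 - V 0) (V 2 - V 0).

Hypothesis V_nondeg : \det edge_mx != 0.

(* The last two barycentric coordinates of x are the coordinates of x - V 0 in
   the basis given by the rows V 1 - V 0 and V 2 - V 0 of edge_mx. *)
Definition bary_tail (j : 'I_2) : {mpoly R[2]} :=
  \sum_k ('X_k - (V 0 0 k)%:MP) * (invmx edge_mx k j)%:MP.

Definition bary (i : 'I_3) : {mpoly R[2]} :=
  if unlift 0 i is Some j then bary_tail j else 1 - \sum_j bary_tail j.

Lemma row_edge_mx j : row j edge_mx = V (lift 0 j) - V 0.
Proof.
apply/rowP => k; rewrite !mxE.
by case: splitP => i0 ji0; rewrite ord1 !mxE; congr (V _ 0 k - _); apply/val_inj;
  rewrite /= /bump /= ji0 ord1.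
Qed.

Lemma meval_bary (l : 'I_3 -> R) (x : 'rV[R]_2) :
  \sum_i l i = 1 -> x = \sum_i l i *: V i -> forall i, (bary i).@[x 0] = l i.
Proof.
move=> l1 xE.
have x_rel : x - V 0 = (\row_j l (lift 0 j)) *m edge_mx.
  rewrite mulmx_sum_row; under eq_bigr do rewrite mxE row_edge_mx.
  rewrite xE -[V 0 in LHS]scale1r -l1 scaler_suml -sumrB big_ord_recl subrr add0r.
  by apply: eq_bigr => j _; rewrite scalerBr.
have tail j : (bary_tail j).@[x 0] = l (lift 0 j).
  have := congr1 (fun r => (r *m invmx edge_mx) 0 j) x_rel.
  rewrite /= mulmxK ?unitmxE ?unitfE // mxE => <-.
  rewrite /bary_tail rmorph_sum [RHS]mxE; apply: eq_bigr => k _.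
  by rewrite /= mevalM mevalB mevalXU !mevalC !mxE.
move=> i; rewrite /bary; case: unliftP => [j ->|->]; first exact: tail.
rewrite mevalB meval1 rmorph_sum /=; under eq_bigr do rewrite tail.
by rewrite -l1 big_ord_recl addrK.
Qed.

Lemma deg_le_bary i : bary i \in deg_le 1.
Proof.
have tail j : bary_tail j \in deg_le 1.
  apply: rpred_sum => k _; apply: (@deg_leM _ _ 1 0).
    by rewrite rpredB ?deg_leXU ?deg_leC.
  exact: deg_leC.
rewrite /bary; case: unlift => [j|]; first exact: tail.
by rewrite rpredB ?rpred_sum // -mpolyC1 deg_leC.
Qed.

Lemma meval_bary_seg i j u k :
  (bary k).@[((1 - u) *: V i + u *: V j) 0] = seg_coords i j u k.
Proof. by apply: meval_bary; rewrite ?sum_seg_coords ?sum_seg_coordsZ. Qed.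

Lemma meval_bary_vertex i k : (bary k).@[V i 0] = (k == i)%:R.
Proof.
have := meval_bary_seg i i 0 k.
by rewrite subr0 scale1r scale0r addr0 /seg_coords subr0 mul1r mul0r addr0.
Qed.

Lemma vertex_inj : injective V.
Proof.
move=> i j Vij; have := meval_bary_vertex j i.
rewrite -Vij meval_bary_vertex eqxx.
by case: eqP => // _ /eqP; rewrite mulr1n mulr0n oner_eq0.
Qed.

End Barycentric.

Lemma ord3_succ_neq_pred (c : 'I_3) : c + 1 != c - 1.
Proof. by case: c => -[|[|[|//]]] ?; rewrite -val_eqE. Qed.

Lemma ord3_opposite_vertex (i j : 'I_3) : i != j ->
  exists c : 'I_3,
    [/\ c != i, c != j & (i, j) = (c + 1, c - 1) \/ (j, i) = (c + 1, c - 1)].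
Proof.
move: i j; do 2!case=> -[|[|[|//]]] ?; rewrite -val_eqE //= => _;
  [exists 2|exists 1|exists 2|exists 0|exists 1|exists 0];
  split; rewrite -?val_eqE //; [left|right|right|left|left|right];
  by congr pair; apply/val_inj.
Qed.

Lemma ord3_on_opposite_edge (c c' : 'I_3) : c' != c -> c = c' + 1 \/ c = c' - 1.
Proof.
by move: c c'; do 2!case=> -[|[|[|//]]] ?; rewrite -val_eqE //= => _;
  [right|left|left|right|right|left]; apply/val_inj.
Qed.

Section PlaneGeometry.
Variable R : realType.
Implicit Types (a b n u w : point R).

Lemma row2P u w : u 0 0 = w 0 0 -> u 0 1 = w 0 1 -> u = w.
Proof.
move=> e0 e1; apply/rowP => -[[|[|//]] lt].
  by rewrite (_ : Ordinal lt = 0) //; apply/val_inj.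
by rewrite (_ : Ordinal lt = 1) //; apply/val_inj.
Qed.

Lemma dotE u w : dot u w = u 0 0 * w 0 0 + u 0 1 * w 0 1.
Proof.
rewrite /dot big_ord_recr big_ord1.
by congr (u 0 _ * w 0 _ + u 0 _ * w 0 _); apply/val_inj.
Qed.

Lemma dotDl u w n : dot (u + w) n = dot u n + dot w n.
Proof. by rewrite /dot -big_split; apply: eq_bigr => i _; rewrite mxE mulrDl. Qed.

Lemma dotZl c u n : dot (c *: u) n = c * dot u n.
Proof. by rewrite /dot mulr_sumr; apply: eq_bigr => i _; rewrite mxE mulrA. Qed.

Lemma dotNl u n : dot (- u) n = - dot u n.
Proof. by rewrite -scaleN1r dotZl mulN1r. Qed.

Lemma dotBl u w n : dot (u - w) n = dot u n - dot w n.
Proof. by rewrite dotDl dotNl. Qed.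

Lemma dot0l n : dot 0 n = 0.
Proof. by rewrite -(scale0r 0) dotZl mul0r. Qed.

Lemma dotNr u n : dot u (- n) = - dot u n.
Proof. by rewrite /dot -sumrN; apply: eq_bigr => i _; rewrite mxE mulrN. Qed.

Lemma dotZr c u n : dot u (c *: n) = c * dot u n.
Proof. by rewrite /dot mulr_sumr; apply: eq_bigr => i _; rewrite mxE mulrCA. Qed.

Definition tangential w n : point R := w - dot w n *: n.

Lemma tangentialNr w n : tangential w (- n) = tangential w n.
Proof. by rewrite /tangential dotNr scaleNr scalerN opprK. Qed.

Lemma tangential0 n : tangential 0 n = 0.
Proof. by rewrite /tangential dot0l scale0r subrr. Qed.

Lemma dot_tangential w n : dot n n = 1 -> dot (tangential w n) n = 0.
Proof. by move=> nn; rewrite dotBl dotZl nn mulr1 subrr. Qed.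

Lemma unit_normalC a b : unit_normal b a = - unit_normal a b.
Proof.
rewrite /unit_normal -[a - b]opprB !mxE !sqrrN -scalerN; congr (_ *: _).
by apply/rowP => i; rewrite !mxE; case: eqP; rewrite ?opprK.
Qed.

Lemma dot_unit_normal a b : a != b -> dot (unit_normal a b) (unit_normal a b) = 1.
Proof.
move=> ab; rewrite /unit_normal dotZl dotZr mulrA -expr2 exprVn.
set N := _ + _; have N_ge0 : 0 <= N by rewrite addr_ge0 ?sqr_ge0.
have N_neq0 : N != 0.
  apply: contraNneq ab => /eqP; rewrite paddr_eq0 ?sqr_ge0 // !sqrf_eq0 !mxE !subr_eq0.
  by case/andP => /eqP e0 /eqP e1; apply/eqP/esym/row2P.
rewrite sqr_sqrtr // dotE !mxE /= [X in _ * X](_ : _ = N) ?mulVf // /N !mxE; ring.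
Qed.

End PlaneGeometry.

Section PolynomialFields.
Variable R : realType.
Implicit Types (w d : 'I_2 -> {mpoly R[2]}) (n x : point R).

Definition veval w x : point R := \row_k (w k).@[x 0].

Lemma vevalB w d x : veval (fun k => w k - d k) x = veval w x - veval d x.
Proof. by apply/rowP => k; rewrite !mxE mevalB. Qed.

Definition ptangential d n (k : 'I_2) : {mpoly R[2]} :=
  d k - n 0 k *: \sum_m n 0 m *: d m.

Lemma veval_ptangential d n x : veval (ptangential d n) x = tangential (veval d x) n.
Proof.
apply/rowP => k; rewrite !mxE mevalB mevalZ rmorph_sum [_ * n 0 k]mulrC.
by congr (_ - _ * _); apply: eq_bigr => m _; rewrite /= mevalZ !mxE mulrC.
Qed.

Lemma ptangentialNr d n k : ptangential d (- n) k = ptangential d n k.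
Proof.
rewrite /ptangential mxE scaleNr; under eq_bigr do rewrite mxE scaleNr.
by rewrite sumrN scalerN opprK.
Qed.

End PolynomialFields.

Section TriangleBubble.
Variables (R : realType) (p : nat) (V : 'I_3 -> point R) (w : 'I_2 -> {mpoly R[2]}).
Hypotheses (p_gt0 : (0 < p)%N) (V_nondeg : \det (edge_mx V) != 0).
Hypothesis w_deg : forall k, w k \in deg_le p.

Definition interp_defect (i j : 'I_3) (k : 'I_2) : {mpoly R[2]} :=
  w k - veval w (V i) 0 k *: bary V i - veval w (V j) 0 k *: bary V j.

Definition edge_defect i j : 'I_2 -> {mpoly R[2]} :=
  ptangential (interp_defect i j) (unit_normal (V i) (V j)).

Lemma veval_edge_defect i j x :
  veval (edge_defect i j) x =
  tangential (veval w x - ((bary V i).@[x 0] *: veval w (V i) +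
                           (bary V j).@[x 0] *: veval w (V j)))
             (unit_normal (V i) (V j)).
Proof.
rewrite veval_ptangential; congr tangential.
by apply/rowP => k; rewrite !mxE !mevalB !mevalZ /= !mxE; ring.
Qed.

Lemma edge_defectC i j k : edge_defect i j k = edge_defect j i k.
Proof.
have sym m : interp_defect i j m = interp_defect j i m by rewrite /interp_defect addrAC.
rewrite /edge_defect unit_normalC ptangentialNr /ptangential sym.
by under eq_bigr do rewrite sym.
Qed.

Lemma edge_defect_vertex i j k : i != j -> (edge_defect i j k).@[V i 0] = 0.
Proof.
move=> ij; have := congr1 (fun r : point R => r 0 k) (veval_edge_defect i j (V i)).
rewrite !meval_bary_vertex // eqxx eq_sym (negbTE ij) scale1r scale0r addr0 subrr.
by rewrite tangential0 !mxE.
Qed.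

Lemma deg_le_edge_defect i j k : edge_defect i j k \in deg_le p.
Proof.
have bary_p m : bary V m \in deg_le p := deg_leW p_gt0 (deg_le_bary V m).
have interp_p m : interp_defect i j m \in deg_le p by rewrite !rpredB ?rpredZ.
by rewrite rpredB ?rpredZ ?rpred_sum // => m _; rewrite rpredZ.
Qed.

Definition edge_bubble i j k : {mpoly R[2]} :=
  edge_lift p (bary V i) (bary V j) (V i) (V j) (edge_defect i j k).

Lemma edge_bubbleC i j k : edge_bubble i j k = edge_bubble j i k.
Proof. by rewrite /edge_bubble edge_liftC edge_defectC. Qed.

Lemma deg_le_edge_bubble i j k : edge_bubble i j k \in deg_le p.
Proof. by rewrite deg_le_edge_lift ?deg_le_bary ?deg_le_edge_defect. Qed.

Lemma edge_bubble_vanish i j k (x : point R) :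
  i != j -> (bary V j).@[x 0] = 0 -> (edge_bubble i j k).@[x 0] = 0.
Proof.
move=> ij bj0.
by rewrite edge_lift_off_edge ?edge_defect_vertex ?mulr0 ?deg_le_edge_defect.
Qed.

Lemma edge_bubble_on_edge i j u k : i != j ->
  let x := (1 - u) *: V i + u *: V j in
  (edge_bubble i j k).@[x 0] = (edge_defect i j k).@[x 0].
Proof.
move=> ij x; rewrite /edge_bubble edge_lift_on_edge !meval_bary_seg //.
  by rewrite seg_coords_l ?seg_coords_r.
by rewrite seg_coords_l ?seg_coords_r // subrK.
Qed.

(* The edge opposite the vertex c has endpoints c + 1 and c - 1 in 'I_3. *)
Definition bubble k : {mpoly R[2]} := \sum_(c < 3) edge_bubble (c + 1) (c - 1) k.

Lemma deg_le_bubble k : bubble k \in deg_le p.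
Proof. by apply: rpred_sum => c _; apply: deg_le_edge_bubble. Qed.

Lemma veval_bubble_seg i j u : i != j ->
  let x := (1 - u) *: V i + u *: V j in
  veval bubble x = veval (edge_defect i j) x.
Proof.
move=> ij x; have [c [ci cj ijc]] := ord3_opposite_vertex ij.
have bary_c : (bary V c).@[x 0] = 0 by rewrite meval_bary_seg // seg_coords_other.
apply/rowP => k; rewrite !mxE /bubble rmorph_sum (bigD1 c) //= big1 ?addr0.
  by case: ijc => -[<- <-]; [|rewrite edge_bubbleC]; apply: edge_bubble_on_edge.
move=> c' c'c; have c'_ends := ord3_succ_neq_pred c'.
case: (ord3_on_opposite_edge c'c) bary_c => -> bary_c; last exact: edge_bubble_vanish.
by rewrite edge_bubbleC edge_bubble_vanish // eq_sym.
Qed.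

Lemma bubble_normal_seg i j u : i != j ->
  dot (veval bubble ((1 - u) *: V i + u *: V j)) (unit_normal (V i) (V j)) = 0.
Proof.
move=> ij; rewrite veval_bubble_seg // veval_edge_defect dot_tangential //.
by rewrite dot_unit_normal // (inj_eq (vertex_inj V_nondeg)).
Qed.

Lemma veval_bubble_vertex i : veval bubble (V i) = 0.
Proof.
have ij : i != i + 1 by rewrite eq_sym; case: i => -[|[|[|//]]] ?; rewrite -val_eqE.
have := veval_bubble_seg 0 ij; rewrite subr0 scale1r scale0r addr0 => ->.
by apply/rowP => k; rewrite !mxE edge_defect_vertex.
Qed.

Lemma veval_sub_bubble_seg i j u : i != j ->
  let x := (1 - u) *: V i + u *: V j in
  let L := (1 - u) *: veval w (V i) + u *: veval w (V j) in
  let n := unit_normal (V i) (V j) in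
  veval (fun k => w k - bubble k) x = L + dot (veval w x - L) n *: n.
Proof.
move=> ij x L n; rewrite vevalB veval_bubble_seg // veval_edge_defect.
rewrite !meval_bary_seg // seg_coords_l ?seg_coords_r // -/L /tangential.
by rewrite -/x -/n !opprD !opprK !addrA addrN add0r.
Qed.

End TriangleBubble.

Section Mesh.
Variables (R : realType) (T : finType) (vtx : T -> 'I_3 -> point R).

Lemma seg_in_tri t a b x :
  is_vtx vtx t a -> is_vtx vtx t b -> in_seg a b x -> in_tri vtx t x.
Proof.
move=> [i <-] [j <-] [u [u01 ->]]; exists (seg_coords i j u).
by split=> [k|]; rewrite ?seg_coords_ge0 ?sum_seg_coords ?sum_seg_coordsZ.
Qed.

Lemma vertex_in_tri t a : is_vtx vtx t a -> in_tri vtx t a.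
Proof.
move=> ta; apply: (seg_in_tri ta ta); exists 0.
by rewrite lexx ler01 subr0 scale1r scale0r addr0.
Qed.

Hypothesis vtx_conf : conforming_triangulation vtx.

Lemma conforming_meet t s x : in_tri vtx t x -> in_tri vtx s x ->
  [\/ t = s,
      exists i, is_vtx vtx s (vtx t i) /\ x = vtx t i
    | exists i j u, [/\ i != j, is_vtx vtx s (vtx t i), is_vtx vtx s (vtx t j),
                        0 <= u <= 1 & x = (1 - u) *: vtx t i + u *: vtx t j]].
Proof.
move=> xt xs; case: vtx_conf => _ distinct meet.
have [l [l_ge0 l1 xE shared]] := meet t s x xt xs.
have [/existsP[k /eqP lk0]|/existsPn l_nz] := boolP [exists k, l k == 0]; last first.
  apply: Or31; apply/eqP; apply: contraT => ts; have [i not_shared] := distinct t s ts.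
  by case: not_shared; apply: shared; apply: l_nz.
pose i := k + 1; pose j := k - 1; have ij : i != j := ord3_succ_neq_pred k.
have off m : m != i -> m != j -> m = k.
  move=> mi mj; have [//|km] := eqVneq k m.
  by case: (ord3_on_opposite_edge km) => mE; [move: mi|move: mj]; rewrite mE eqxx.
have l_ij : l i + l j = 1.
  by rewrite -l1 (sum_supp2 ij) // => m mi mj; rewrite (off m mi mj).
have x_ij : x = (1 - l j) *: vtx t i + l j *: vtx t j.
  rewrite xE (sum_supp2 ij) => [|m mi mj]; first by rewrite -l_ij addrK.
  by rewrite (off m mi mj) lk0 scale0r.
have [li0|li_nz] := eqVneq (l i) 0.
  have lj1 : l j = 1 by rewrite -l_ij li0 add0r.
  apply: Or32; exists j; split; first by apply: shared; rewrite lj1 oner_neq0.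
  by rewrite x_ij lj1 subrr scale0r add0r scale1r.
have [lj0|lj_nz] := eqVneq (l j) 0.
  have li1 : l i = 1 by rewrite -l_ij lj0 addr0.
  apply: Or32; exists i; split; first by apply: shared; rewrite li1 oner_neq0.
  by rewrite x_ij lj0 subr0 scale1r scale0r addr0.
apply: Or33; exists i, j, (l j); split=> //; try exact: shared.
by rewrite l_ge0 /= -l_ij lerDr l_ge0.
Qed.

Lemma globally_continuous_of_shared (f : pwfield R T) :
  vertex_continuous vtx f ->
  (forall t s i j u, i != j -> is_vtx vtx s (vtx t i) -> is_vtx vtx s (vtx t j) ->
     0 <= u <= 1 ->
     fval f t ((1 - u) *: vtx t i + u *: vtx t j) =
     fval f s ((1 - u) *: vtx t i + u *: vtx t j)) ->
  globally_continuous vtx f.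
Proof.
move=> f_vertex f_edge t s x xt xs.
case: (conforming_meet xt xs) => [<- // | [i [si ->]] | [i [j [u [ij si sj u01 ->]]]]].
  by apply: f_vertex si; exists i.
exact: f_edge.
Qed.

End Mesh.

Section Decomposition.
Variables (R : realType) (T : finType) (vtx : T -> 'I_3 -> point R).
Variables (p : nat) (v : pwfield R T).
Hypotheses (vtx_conf : conforming_triangulation vtx) (p_gt0 : (0 < p)%N).
Hypothesis v_P1p : P1p vtx p v.

Let vtx_nondeg t : \det (edge_mx (vtx t)) != 0.
Proof. by case: vtx_conf => nondeg _ _; apply: nondeg. Qed.

Let v_deg t k : v t k \in deg_le p.
Proof. by case: v_P1p => v_deg _ _; apply: v_deg. Qed.

Definition bubble_part : pwfield R T := fun t => bubble p (vtx t) (v t).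

Definition continuous_part : pwfield R T := fun t k => v t k - bubble_part t k.

Lemma bubble_part_normal t a b x : a != b ->
  is_vtx vtx t a -> is_vtx vtx t b -> in_seg a b x ->
  dot (fval bubble_part t x) (unit_normal a b) = 0.
Proof.
move=> ab [i ai] [j bj] [u [_ ->]]; subst a b.
by apply: bubble_normal_seg => //; apply: contraNneq ab => ->.
Qed.

Lemma Sigma_b_bubble_part : Sigma_b vtx p bubble_part.
Proof.
split; [split|exact: bubble_part_normal].
- by move=> t k; exact: (deg_le_bubble (vtx t) p_gt0 (v_deg t) k).
- move=> t s a b x ab ta tb sa sb xab.
  exact: etrans (bubble_part_normal ab ta tb xab)
                (esym (bubble_part_normal ab sa sb xab)).
- move=> t s a [i <-] [j ji].
  have := veval_bubble_vertex p_gt0 (vtx_nondeg s) (v_deg s) j; rewrite ji => bs.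
  exact: etrans (veval_bubble_vertex p_gt0 (vtx_nondeg t) (v_deg t) i) (esym bs).
Qed.

Lemma continuous_part_seg t s i j u : i != j ->
  is_vtx vtx s (vtx t i) -> is_vtx vtx s (vtx t j) -> 0 <= u <= 1 ->
  fval continuous_part t ((1 - u) *: vtx t i + u *: vtx t j) =
  fval continuous_part s ((1 - u) *: vtx t i + u *: vtx t j).
Proof.
move=> ij [i' ei'] [j' ej'] u01; case: v_P1p => _ v_normal v_vertex.
have i'j' : i' != j'.
  rewrite -(inj_eq (vertex_inj (vtx_nondeg s))) ei' ej'.
  by rewrite (inj_eq (vertex_inj (vtx_nondeg t))).
have cs := veval_sub_bubble_seg p_gt0 (vtx_nondeg s) (v_deg s) u i'j'.
rewrite /= ei' ej' in cs.
have ct := veval_sub_bubble_seg p_gt0 (vtx_nondeg t) (v_deg t) u ij.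
apply: etrans ct (etrans _ (esym cs)).
have v_at a : is_vtx vtx t a -> is_vtx vtx s a -> veval (v s) a = veval (v t) a.
  by move=> ta sa; exact: esym (v_vertex t s a ta sa).
rewrite (v_at (vtx t i)) ?(v_at (vtx t j));
  try by [exists i|exists j|exists i'|exists j'].
congr (_ + _ *: _); rewrite !dotBl; congr (_ - _).
apply: v_normal => //; [|by exists i|by exists j|by exists i'|by exists j'|by exists u].
by rewrite (inj_eq (vertex_inj (vtx_nondeg t))).
Qed.

Lemma continuous_part_vertex t i : fval continuous_part t (vtx t i) = fval v t (vtx t i).
Proof.
apply: etrans (vevalB _ _ _) _.
by rewrite (veval_bubble_vertex p_gt0 (vtx_nondeg t) (v_deg t)) subr0.
Qed.

Lemma Lh_continuous_part : Lh vtx p continuous_part.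
Proof.
split=> [t k|].
  exact: rpredB (v_deg t k) (deg_le_bubble (vtx t) p_gt0 (v_deg t) k).
apply: (globally_continuous_of_shared vtx_conf _ continuous_part_seg).
move=> t s a [i <-] [j ji]; case: v_P1p => _ _ v_vertex.
rewrite continuous_part_vertex -ji continuous_part_vertex ji.
by apply: v_vertex; [exists i|exists j].
Qed.

Lemma P1p_decomposition : exists l b : pwfield R T,
  [/\ Lh vtx p l, Sigma_b vtx p b & forall t i, v t i = l t i + b t i].
Proof.
exists continuous_part, bubble_part; split.
- exact: Lh_continuous_part.
- exact: Sigma_b_bubble_part.
- by move=> t i; rewrite subrK.
Qed.

End Decomposition.

Lemma P1p_of_decomposition (R : realType) (T : finType) (vtx : T -> 'I_3 -> point R)
    (p : nat) (l b v : pwfield R T) :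
  Lh vtx p l -> Sigma_b vtx p b -> (forall t i, v t i = l t i + b t i) ->
  P1p vtx p v.
Proof.
move=> [l_deg l_cont] [[b_deg _ b_vertex] b_normal] vE.
have v_sum t x : fval v t x = fval l t x + fval b t x.
  by apply/rowP => k; rewrite !mxE vE mevalD.
split=> [t k | t s a c x ac ta tc sa sc xac | t s a ta sa].
- by rewrite vE -deg_leE rpredD // deg_leE.
- rewrite !v_sum !dotDl (b_normal t a c x) // (b_normal s a c x) //.
  by rewrite (l_cont t s x) //; [apply: (seg_in_tri ta tc)|apply: (seg_in_tri sa sc)].
- rewrite !v_sum (b_vertex t s a) // (l_cont t s a) //; exact: vertex_in_tri.
Qed.

Theorem mainTheorem1 (R : realType) (T : finType) (vtx : T -> 'I_3 -> point R)
    (p : nat) :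
  conforming_triangulation vtx -> (2 <= p)%N ->
  forall v : pwfield R T,
    P1p vtx p v <->
    exists l b : pwfield R T,
      [/\ Lh vtx p l, Sigma_b vtx p b & forall t i, v t i = l t i + b t i].
Proof.
move=> vtx_conf p_ge2 v; split=> [v_P1p | [l [b [l_Lh b_Sigma vE]]]].
  exact: P1p_decomposition vtx_conf (ltnW p_ge2) v_P1p.
exact: P1p_of_decomposition l_Lh b_Sigma vE.
Qed.
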